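(* Let $\mathbb{F},\widetilde{\mathbb{F}}$ be fields with $\operatorname{char}(\mathbb{F})\notin\{2,3,5\}$ and $\operatorname{char}(\widetilde{\mathbb{F}})\neq 2$, and let $f:\mathbb{F}\to\widetilde{\mathbb{F}}$ be an SD-map. Then $\operatorname{char}(\mathbb{F})=\operatorname{char}(\widetilde{\mathbb{F}})$, and moreover $f$ fixes the common prime subfield (i.e.\ $f$ restricted to the prime subfield of $\mathbb{F}$ is the canonical identification with the prime subfield of $\widetilde{\mathbb{F}}$).
   Context: A map $f:\mathbb{F}\to\widetilde{\mathbb{F}}$ between fields is called an SD-map if for all $x\neq y$ in $\mathbb{F}$ one has $f(x)\neq f(y)$ and \[ f\left(\frac{x+y}{x-y}\right)=\frac{f(x)+f(y)}{f(x)-f(y)}. \] *)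

From HB Require Import structures.
From mathcomp Require Import all_boot all_order all_algebra.
Set Implicit Arguments. Unset Strict Implicit. Unset Printing Implicit Defensive.
Import Order.TTheory GRing.Theory Num.Theory.
Local Open Scope ring_scope.

Definition SD_map (F G : fieldType) (f : F -> G) : Prop :=
  forall x y : F, x != y ->
    f x != f y /\ f ((x + y) / (x - y)) = (f x + f y) / (f x - f y).

From mathcomp Require Import all_boot all_order all_algebra.
From mathcomp Require Import ring.
Set Implicit Arguments.
Unset Strict Implicit.
Unset Printing Implicit Defensive.
Import GRing.Theory.
Local Open Scope ring_scope.

(* Specialising the SD identity at (x, 0), (x, -x) and (x, 1) shows that f
   fixes 0 and 1, is odd, and maps (x + 1) / (x - 1) to (f x + 1) / (f x - 1);
   since (x y + y) / (x y - y) = (x + 1) / (x - 1), f is multiplicative.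
   Writing x + 1 = (x + 1) / (x - 1) * (x - 1) then gives the recurrence
   f (x + 1) (f x - 1) = (f x + 1) f (x - 1), which determines f on the
   naturals from f 0, f 1 and f 2.  Its instances at 2, 4 and 5, together
   with f 4 = (f 2)^2 and f 6 = f 2 f 3, force f 2 = 2 as soon as 2, 3 and 5
   are invertible in F.  So f n = n for every natural n; injectivity then
   identifies the characteristics and multiplicativity handles fractions. *)

Lemma natr_neq0_notin_pchar (R : nzRingType) (p : nat) :
  p \notin [pchar R] -> prime p -> (p%:R : R) != 0.
Proof. by move=> + p_pr; rewrite inE /= p_pr. Qed.

Section SDMap.

Variables (F G : fieldType) (f : F -> G).
Hypothesis f_sd : SD_map f.
Hypotheses (two_neq0_F : (2%:R : F) != 0) (two_neq0_G : (2%:R : G) != 0).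

Lemma sd_map_inj : injective f.
Proof.
move=> x y fxy; apply/eqP; apply: contraLR (eqxx (f x)) => /f_sd[].
by rewrite fxy eqxx.
Qed.

Lemma sd_map_ratio0 x : x != 0 -> f 1 * (f x - f 0) = f x + f 0.
Proof.
move=> x0; have [fx0 e] := f_sd x0.
by move: e; rewrite addr0 subr0 divff // => ->; rewrite mulfVK // subr_eq0.
Qed.

Lemma sd_map1 : f 1 = 1.
Proof.
have e1 := sd_map_ratio0 (oner_neq0 F).
have eN1 : f 1 * (f (-1) - f 0) = f (-1) + f 0.
  by apply: sd_map_ratio0; rewrite oppr_eq0 oner_neq0.
have f1N1 : f 1 - f (-1) != 0.
  by rewrite subr_eq0 (inj_eq sd_map_inj) -addr_eq0.
apply: (mulIf f1N1); rewrite mul1r.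
transitivity (f 1 * (f 1 - f 0) - f 1 * (f (-1) - f 0)); first by ring.
by rewrite e1 eN1; ring.
Qed.

Lemma sd_map0 : f 0 = 0.
Proof.
have := sd_map_ratio0 (oner_neq0 F); rewrite sd_map1 mul1r => /eqP.
rewrite -subr_eq0 (_ : _ - _ = - (2%:R * f 0)); last by ring.
by rewrite oppr_eq0 mulf_eq0 (negbTE two_neq0_G) => /eqP.
Qed.

Lemma sd_mapN x : f (- x) = - f x.
Proof.
have [->|x0] := eqVneq x 0; first by rewrite oppr0 sd_map0 oppr0.
have xNx : x != - x.
  by rewrite -subr_eq0 opprK -mulr2n -mulr_natr mulf_neq0.
have [fxNx] := f_sd xNx; rewrite subrr mul0r sd_map0 => /esym/eqP.
rewrite mulf_eq0 invr_eq0 subr_eq0 (negbTE fxNx) orbF addr_eq0 => /eqP.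
by move=> ->; rewrite opprK.
Qed.

Lemma sd_map_cayley x :
  x != 1 -> f ((x + 1) / (x - 1)) = (f x + 1) / (f x - 1).
Proof. by move=> /f_sd[_]; rewrite sd_map1. Qed.

Lemma sd_mapM x y : f (x * y) = f x * f y.
Proof.
have [->|y0] := eqVneq y 0; first by rewrite mulr0 sd_map0 mulr0.
have [->|x1] := eqVneq x 1; first by rewrite sd_map1 !mul1r.
have xyy : x * y != y by rewrite -{2}[y]mul1r (inj_eq (mulIf y0)).
have [fxy_neq_fy] := f_sd xyy.
have -> : (x * y + y) / (x * y - y) = (x + 1) / (x - 1).
  by field; rewrite !subr_eq0 x1 xyy.
have fxyy : f (x * y) - f y != 0 by rewrite subr_eq0.
have fx1 : f x - 1 != 0 by rewrite subr_eq0 -sd_map1 (inj_eq sd_map_inj).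
rewrite sd_map_cayley // => /eqP; rewrite eqr_div // => /eqP e.
apply/eqP; rewrite -subr_eq0 -(mulrI_eq0 _ (mulfI two_neq0_G)).
apply/eqP; transitivity ((f x + 1) * (f (x * y) - f y)
                         - (f (x * y) + f y) * (f x - 1)); first by ring.
by rewrite e subrr.
Qed.

Lemma sd_mapV x : f x^-1 = (f x)^-1.
Proof.
have [->|x0] := eqVneq x 0; first by rewrite invr0 sd_map0 invr0.
have fx0 : f x != 0 by rewrite -sd_map0 (inj_eq sd_map_inj).
by apply: (mulfI fx0); rewrite -sd_mapM !divff // sd_map1.
Qed.

Lemma sd_map_recurrence x : f (x + 1) * (f x - 1) = (f x + 1) * f (x - 1).
Proof.
have [->|x1] := eqVneq x 1.
  by rewrite subrr sd_map1 subrr sd_map0 !mulr0.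
have x10 : x - 1 != 0 by rewrite subr_eq0.
have fx1 : f x - 1 != 0 by rewrite subr_eq0 -sd_map1 (inj_eq sd_map_inj).
by rewrite -{1}[x + 1](divfK x10) sd_mapM sd_map_cayley // mulrAC divfK.
Qed.

Lemma sd_map_nat_recurrence n :
  f n.+2%:R * (f n.+1%:R - 1) = (f n.+1%:R + 1) * f n%:R.
Proof.
by have := sd_map_recurrence n.+1%:R; rewrite -[n.+1%:R]natr1 addrK !natr1.
Qed.

Hypotheses (three_neq0_F : (3%:R : F) != 0) (five_neq0_F : (5%:R : F) != 0).

Lemma sd_map2 : f 2%:R = 2%:R.
Proof.
have f4 : f 4%:R = f 2%:R * f 2%:R by rewrite -sd_mapM -natrM.
have f6 : f 6%:R = f 2%:R * f 3%:R by rewrite -sd_mapM -natrM.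
have rec1 := sd_map_nat_recurrence 1; have rec3 := sd_map_nat_recurrence 3.
have rec4 := sd_map_nat_recurrence 4.
rewrite sd_map1 mulr1 in rec1; rewrite f4 in rec3; rewrite f6 f4 in rec4.
set u := f 2%:R in rec1 rec3 rec4 *; set c := f 3%:R in rec1 rec3 rec4.
set P := f 5%:R in rec1 rec3 rec4.
have u0 : u != 0 by rewrite -sd_map0 (inj_eq sd_map_inj).
have P0 : P != 0 by rewrite -sd_map0 (inj_eq sd_map_inj).
have u1 : u + 1 != 0.
  by rewrite addr_eq0 -sd_map1 -sd_mapN (inj_eq sd_map_inj) -addr_eq0 natr1.
have {}rec4 : c * (P - 1) = (P + 1) * u.
  by apply: (mulfI u0); rewrite mulrA rec4 mulrCA.
(* eliminating c and P from the three instances of the recurrence *)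
have : (u + 1) * (2%:R * P * u * (u - 2%:R)) = 0.
  transitivity ((u - 1) * (P * (u * u - 1) - (u * u + 1) * c)
    + (u * u + 1) * (c * (u - 1) - (u + 1))
    - (u + 1) * ((u - 1) * (c * (P - 1) - (P + 1) * u)
                 - (P - 1) * (c * (u - 1) - (u + 1)))); first by ring.
  by rewrite rec1 rec3 rec4; ring.
move/eqP; rewrite !mulf_eq0 (negbTE u1) (negbTE two_neq0_G) (negbTE P0).
by rewrite (negbTE u0) subr_eq0 => /eqP.
Qed.

Lemma sd_map_nat n : f n%:R = n%:R.
Proof.
suff [] : f n%:R = n%:R /\ f n.+1%:R = n.+1%:R by [].
elim: n => [|k [fk fk1]]; first by rewrite sd_map0 sd_map1.
split=> //; have rec := sd_map_nat_recurrence k.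
rewrite fk1 fk -[k.+1%:R]natr1 addrK !natr1 in rec.
have [k0|k0] := eqVneq (k%:R : G) 0; last first.
  by apply: (mulIf k0); rewrite rec mulrC.
have k0F : (k%:R : F) = 0 by apply: sd_map_inj; rewrite fk k0 sd_map0.
by rewrite -addn2 !natrD k0F k0 !add0r sd_map2.
Qed.

Lemma sd_map_int (z : int) : f z%:~R = z%:~R.
Proof.
by case: z => n; rewrite ?NegzE ?mulrNz -!pmulrn ?sd_mapN sd_map_nat.
Qed.

Lemma sd_map_natr_eq0 n : ((n%:R : G) == 0) = ((n%:R : F) == 0).
Proof. by rewrite -sd_map_nat -sd_map0 (inj_eq sd_map_inj). Qed.

End SDMap.

Theorem theorem2p4 (F G : fieldType) (f : F -> G)
  (hF2 : 2%N \notin [pchar F]) (hF3 : 3%N \notin [pchar F])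
  (hF5 : 5%N \notin [pchar F]) (hG2 : 2%N \notin [pchar G])
  (hf : SD_map f) :
  [pchar F] =i [pchar G] /\
  (forall m n : int, (n%:~R : F) != 0 ->
     f (m%:~R / n%:~R) = (m%:~R / n%:~R : G)).
Proof.
have h2F := natr_neq0_notin_pchar hF2 isT.
have h3F := natr_neq0_notin_pchar hF3 isT.
have h5F := natr_neq0_notin_pchar hF5 isT.
have h2G := natr_neq0_notin_pchar hG2 isT.
split=> [p | m n _].
  by rewrite !inE (sd_map_natr_eq0 hf h2F h2G h3F h5F).
rewrite (sd_mapM hf h2F h2G) (sd_mapV hf h2F h2G).
by rewrite !(sd_map_int hf h2F h2G h3F h5F).
Qed.
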